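(* Let $f$ be an additive function from the positive integers to the nonnegative integers with $f(p)\ge1$ for every prime $p$. Every positive integer is $f$-practical if and only if $f(p^k)\le 1+\sum_{i=0}^{k-1}f(p^i)$ for every prime $p$ and every positive integer $k$.
   Context: $f$ additive means $f(ab)=f(a)+f(b)$ whenever $\gcd(a,b)=1$ (so $f(1)=0$). $S_f(n)=\sum_{d\mid n}f(d)$. A positive integer $n$ is $f$-practical if every positive integer $m\le S_f(n)$ equals $\sum_{d\in\mathcal{D}}f(d)$ for some set $\mathcal{D}$ of distinct divisors of $n$. *)

From mathcomp Require Import all_boot.
Set Implicit Arguments. Unset Strict Implicit. Unset Printing Implicit Defensive.

(* f : nat -> nat represents a function on positive integers; its value at 0
   is irrelevant (never used). *)

Definition additive (f : nat -> nat) : Prop :=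
  forall a b, 0 < a -> 0 < b -> coprime a b -> f (a * b) = f a + f b.

Definition S_f (f : nat -> nat) (n : nat) : nat :=
  \sum_(d <- divisors n) f d.

Definition f_practical (f : nat -> nat) (n : nat) : Prop :=
  forall m, 0 < m -> m <= S_f f n ->
    exists D : seq nat, [/\ uniq D, (forall d, d \in D -> d %| n)
                          & \sum_(d <- D) f d = m].

From mathcomp Require Import all_boot.
From mathcomp Require Import zify.

(** Appending to a list of weights a weight that exceeds the old total by at
    most one preserves the property that every integer up to the total is a
    sub-sum.  So the divisors of n, taken in increasing order, have this
    property as soon as each f(N) is at most one more than the sum of f over
    the smaller divisors.  Writing N = d p^j with p prime, p not dividing d and
    j >= 1, additivity and the hypothesis at p^j give
    f(N) <= 1 + sum_(i < j) f(d p^i), a sum over smaller divisors.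
    Conversely, the divisors of p^k are the p^i with i <= k; since the p^i
    with i < k have total A = sum_(i < k) f(p^i), a set of them with f-sum
    A + 1 must contain p^k, whence f(p^k) <= A + 1. *)

Lemma leq_sum_uniq_sub {T : eqType} (F : T -> nat) {s s' : seq T} :
  uniq s -> uniq s' -> {subset s <= s'} ->
  \sum_(x <- s) F x <= \sum_(x <- s') F x.
Proof. exact: (uniq_sub_le_big leqnn (fun m n => leq_addr n m)). Qed.

Section SubsetSums.

Context {T : eqType} (F : T -> nat).

Definition sum_complete (s : seq T) :=
  forall m, m <= \sum_(x <- s) F x ->
    exists D : seq T, [/\ uniq D, {subset D <= s} & \sum_(x <- D) F x = m].

Lemma sum_complete_nil : sum_complete [::].
Proof.
move=> m; rewrite big_nil leqn0 => /eqP ->.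
by exists [::]; rewrite big_nil.
Qed.

Lemma sum_complete_perm {s t : seq T} :
  perm_eq s t -> sum_complete s -> sum_complete t.
Proof.
move=> pst cs m; rewrite -(perm_big _ pst) => /cs [D [uD sD eD]].
by exists D; split => // x /sD; rewrite (perm_mem pst).
Qed.

Lemma sum_complete_cons {s : seq T} {b : T} :
  sum_complete s -> b \notin s -> F b <= 1 + \sum_(x <- s) F x ->
  sum_complete (b :: s).
Proof.
move=> cs bs Fb m; rewrite big_cons => hm.
have [small|large] := leqP m (\sum_(x <- s) F x).
  have [D [uD sD eD]] := cs m small.
  by exists D; split => // x /sD xs; rewrite inE xs orbT.
have [|D [uD sD eD]] := cs (m - F b); first by lia.
exists (b :: D); split.
- by rewrite /= uD andbT; apply: contra bs; apply: sD.
- by move=> x; rewrite inE => /predU1P [->|/sD xs]; rewrite inE ?eqxx ?xs ?orbT.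
- by rewrite big_cons eD; lia.
Qed.

End SubsetSums.

Lemma filter_ltnS_perm (s : seq nat) N : uniq s -> N \in s ->
  perm_eq (N :: [seq x <- s | x < N]) [seq x <- s | x < N.+1].
Proof.
move=> us Ns; apply: uniq_perm.
- by rewrite /= mem_filter ltnn filter_uniq.
- exact: filter_uniq.
move=> x; rewrite inE !mem_filter [x < N.+1]ltnS [x <= N]leq_eqVlt.
by case: eqVneq => [->|]; rewrite ?Ns.
Qed.

Lemma filter_ltnS_notin (s : seq nat) N : N \notin s ->
  [seq x <- s | x < N.+1] = [seq x <- s | x < N].
Proof.
move=> Ns; apply: eq_in_filter => x xs.
by rewrite ltnS leq_eqVlt; case: eqVneq xs Ns => // -> ->.
Qed.

Lemma uniq_powers p k : 1 < p -> uniq [seq p ^ i | i <- index_iota 0 k].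
Proof. by move=> p_gt1; rewrite map_inj_uniq ?iota_uniq //; apply: expnI. Qed.

Lemma perm_divisors_pfactor p k : prime p ->
  perm_eq (divisors (p ^ k)) [seq p ^ i | i <- index_iota 0 k.+1].
Proof.
move=> p_pr; apply: uniq_perm; rewrite ?divisors_uniq ?uniq_powers ?prime_gt1 //.
move=> x; rewrite -dvdn_divisors ?expn_gt0 ?prime_gt0 //.
apply/dvdn_pfactor/mapP => // -[i].
  by move=> ik ->; exists i; rewrite // mem_index_iota ltnS.
by rewrite mem_index_iota ltnS => ik ->; exists i.
Qed.

Lemma S_f_pfactor f p k : prime p ->
  S_f f (p ^ k) = \sum_(0 <= i < k) f (p ^ i) + f (p ^ k).
Proof.
move=> p_pr; rewrite /S_f (perm_big _ (perm_divisors_pfactor p k p_pr)).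
by rewrite big_map big_nat_recr.
Qed.

Definition prime_power_bounded (f : nat -> nat) :=
  forall p k, prime p -> 0 < k -> f (p ^ k) <= 1 + \sum_(0 <= i < k) f (p ^ i).

Section Additive.

Variable f : nat -> nat.
Hypothesis f_add : additive f.

Lemma additive_f1 : f 1 = 0.
Proof. by have := @f_add 1 1 isT isT (coprimen1 1); rewrite muln1; lia. Qed.

Hypothesis f_bounded : prime_power_bounded f.

Lemma f_pfactor_mul_le {p d j} : prime p -> 0 < d -> coprime p d -> 0 < j ->
  f (d * p ^ j) <= 1 + \sum_(0 <= i < j) f (d * p ^ i).
Proof.
move=> p_pr d_gt0 pd j_gt0.
have split_f i : f (d * p ^ i) = f d + f (p ^ i).
  apply: f_add => //; first by rewrite expn_gt0 prime_gt0.
  by rewrite coprime_sym coprimeXl.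
under eq_bigr => i _ do rewrite split_f.
rewrite split_f big_split /= sum_nat_const_nat subn0.
have := @f_bounded _ _ p_pr j_gt0; have := leq_pmull (f d) j_gt0; lia.
Qed.

Lemma f_le_sum_smaller_divisors n N : 0 < n -> N %| n ->
  f N <= 1 + \sum_(d <- [seq d <- divisors n | d < N]) f d.
Proof.
move=> n_gt0 Nn; have N_gt0 : 0 < N := dvdn_gt0 n_gt0 Nn.
have [N_le1|N_gt1] := leqP N 1.
  by rewrite (_ : N = 1) ?additive_f1 //; lia.
have p_pr : prime (pdiv N) := pdiv_prime N_gt1.
have [d pd eN] := pfactor_coprime p_pr N_gt0.
set p := pdiv N in p_pr pd eN; set j := logn p N in eN.
have j_gt0 : 0 < j by rewrite logn_gt0 mem_primes p_pr N_gt0 pdiv_dvd.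
have d_gt0 : 0 < d by move: N_gt0; rewrite eN muln_gt0 => /andP [].
have smaller : {subset [seq d * p ^ i | i <- index_iota 0 j]
                 <= [seq d <- divisors n | d < N]}.
  move=> x /mapP [i]; rewrite mem_index_iota => /= ij ->.
  rewrite mem_filter -dvdn_divisors // eN ltn_pmul2l // ltn_exp2l ?prime_gt1 //.
  rewrite ij; apply: dvdn_trans Nn; rewrite eN dvdn_mul // dvdn_exp2l //.
  exact: ltnW.
have uniq_dpowers : uniq [seq d * p ^ i | i <- index_iota 0 j].
  rewrite map_inj_uniq ?iota_uniq // => a b /eqP.
  by rewrite eqn_pmul2l // eqn_exp2l ?prime_gt1 // => /eqP.
have := leq_sum_uniq_sub f uniq_dpowers (filter_uniq _ (divisors_uniq n)) smaller.
rewrite big_map => le_sum; rewrite {1}eN.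
apply: leq_trans (f_pfactor_mul_le p_pr d_gt0 pd j_gt0) _.
by rewrite leq_add2l.
Qed.

Lemma sum_complete_divisors n : 0 < n -> sum_complete f (divisors n).
Proof.
move=> n_gt0.
have below N : sum_complete f [seq d <- divisors n | d < N].
  elim: N => [|N IH].
    by rewrite (eq_filter (a2 := pred0)) // filter_pred0; exact: sum_complete_nil.
  have [Nd|Nd] := boolP (N \in divisors n); last by rewrite filter_ltnS_notin.
  apply: (sum_complete_perm f (filter_ltnS_perm _ _ (divisors_uniq n) Nd)).
  apply: (sum_complete_cons f IH); first by rewrite mem_filter ltnn.
  by apply: f_le_sum_smaller_divisors; rewrite ?dvdn_divisors.
have := below n.+1; rewrite (eq_in_filter (a2 := predT)) ?filter_predT // => x.
by rewrite -dvdn_divisors // ltnS => /(dvdn_leq n_gt0) ->.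
Qed.

End Additive.

Lemma f_practical_of_complete f n :
  0 < n -> sum_complete f (divisors n) -> f_practical f n.
Proof.
move=> n_gt0 cs m _ /cs [D [uD sD eD]].
by exists D; split => // d /sD; rewrite -dvdn_divisors.
Qed.

Lemma pfactor_bound_of_practical f p k : prime p -> 0 < k ->
  f_practical f (p ^ k) -> f (p ^ k) <= 1 + \sum_(0 <= i < k) f (p ^ i).
Proof.
move=> p_pr k_gt0 pract; rewrite leqNgt; apply/negP => f_large.
set A := \sum_(0 <= i < k) f (p ^ i) in f_large.
have [|D [uD sD eD]] := pract (1 + A) isT; first by rewrite S_f_pfactor //; lia.
have [pkD|pkD] := boolP (p ^ k \in D).
  by move: eD; rewrite (big_rem _ pkD) /=; lia.
have lower : {subset D <= [seq p ^ i | i <- index_iota 0 k]}.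
  move=> x xD; have /(dvdn_pfactor _ _ p_pr) [i ik ex] := sD x xD.
  apply/mapP; exists i; rewrite // mem_index_iota ltn_neqAle ik andbT.
  by apply: contraNneq pkD => ei; rewrite -ei -ex.
have := leq_sum_uniq_sub f uD (uniq_powers _ k (prime_gt1 p_pr)) lower.
by rewrite big_map eD; lia.
Qed.

Theorem corollary6p2 (f : nat -> nat) :
  additive f ->
  (forall p, prime p -> 1 <= f p) ->
  ((forall n, 0 < n -> f_practical f n) <->
   (forall p k, prime p -> 0 < k -> f (p ^ k) <= 1 + \sum_(0 <= i < k) f (p ^ i))).
Proof.
move=> f_add _; split => [pract p k p_pr k_gt0 | bounded n n_gt0].
  by apply: pfactor_bound_of_practical (pract _ _) => //; rewrite expn_gt0 prime_gt0.
by apply: f_practical_of_complete; last exact: sum_complete_divisors.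
Qed.
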